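(* Let $q\ge 4$ be a power of $2$. Then there exists a linear AOA$(2,3,q+1,q)$.
   Context: An orthogonal array OA$(t,k,v)$ (with $1\le t\le k$) is a $v^t\times k$ array with entries from a set $X$ of size $v$ such that, for every choice of $t$ of its columns, each $t$-tuple in $X^t$ appears exactly once as a row of the corresponding $v^t\times t$ subarray. For integers $1\le s\le t\le k$, an augmented orthogonal array AOA$(s,t,k,v)$ is a $v^t\times(k+1)$ array $A$ such that: (1) the first $k$ columns of $A$ form an OA$(t,k,v)$ on a symbol set $X$ of size $v$; (2) the last column of $A$ has entries from a set $Y$ of size $v^{t-s}$; (3) for any choice of $s$ of the first $k$ columns, these $s$ columns together with the last column contain every $(s+1)$-tuple of $X^s\times Y$ exactly once as a row. For a prime power $q$, an AOA$(s,t,k,q)$ is linear if $X=\mathbb{F}_q$, $Y=\mathbb{F}_q^{t-s}$, and its set of rows, regarded as vectors in $\mathbb{F}_q^{k}\times\mathbb{F}_q^{t-s}=\mathbb{F}_q^{k+t-s}$, is an $\mathbb{F}_q$-linear subspace. *)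

From HB Require Import structures.
From mathcomp Require Import all_boot all_algebra.
Set Implicit Arguments. Unset Strict Implicit. Unset Printing Implicit Defensive.
Import GRing.Theory.

(* A choice of t columns is a set C of
   t column indices; "each t-tuple appears exactly once" is expressed by
   quantifying over all assignments f of symbols to the columns in C. *)

(* OA(t,k,v) on the symbol set X (v = #|X|). *)
Definition is_OA (t k : nat) (X : finType) (A : seq 'rV[X]_k) : Prop :=
  size A = (#|X| ^ t)%N /\
  forall C : {set 'I_k}, #|C| = t ->
    forall f : 'I_k -> X,
      count (fun r : 'rV[X]_k => [forall i in C, r ord0 i == f i]) A = 1%N.
Arguments is_OA t k {X} A.

(* AOA(s,t,k,v): rows are pairs (first k columns, last column in Y). *)
Definition is_AOA (s t k : nat) (X Y : finType) (A : seq ('rV[X]_k * Y)) : Prop :=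
  [/\ [/\ (1 <= s)%N, (s <= t)%N & (t <= k)%N],
      is_OA t k (map fst A),
      #|Y| = (#|X| ^ (t - s))%N &
      forall C : {set 'I_k}, #|C| = s ->
        forall (f : 'I_k -> X) (y : Y),
          count (fun r : 'rV[X]_k * Y =>
                   [forall i in C, r.1 ord0 i == f i] && (r.2 == y)) A = 1%N].
Arguments is_AOA s t k {X Y} A.

Definition is_linear_AOA (s t k : nat) (F : finFieldType)
    (A : seq ('rV[F]_k * 'rV[F]_(t - s))) : Prop :=
  is_AOA s t k A /\
  exists U : {vspace 'rV[F]_(k + (t - s))},
    forall v : 'rV[F]_(k + (t - s)),
      (v \in U) = has (fun r => row_mx r.1 r.2 == v) A.
Arguments is_linear_AOA s t k {F} A.

From HB Require Import structures.
From mathcomp Require Import all_boot all_algebra.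
From mathcomp Require Import ring finfield.
Set Implicit Arguments. Unset Strict Implicit. Unset Printing Implicit Defensive.
Import GRing.Theory.
Local Open Scope ring_scope.

(* The array is the linear code spanned by the rows of a 3 x (q+2) matrix whose
   first q+1 columns are the points (1, s, s^2) and (0, 0, 1) of a conic of
   PG(2, q) and whose last column is (0, 1, 0).  A set of 3 columns carries
   each triple exactly once as soon as those columns are linearly independent.  Three
   points of a conic are never collinear, which gives the OA(3, q+1, q); in
   characteristic 2 every tangent of the conic passes through its nucleus
   (0, 1, 0), so the nucleus is not on the line through any two conic points,
   which gives the augmented condition for s = 2. *)

Lemma forall_in_enum_val (T : finType) (S : {set T}) (P : pred T) :
  [forall i in S, P i] = [forall k : 'I_#|S|, P (enum_val k)].
Proof.
apply/forall_inP/forallP => [allP k | allP i iS]; first exact/allP/enum_valP.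
by rewrite -(enum_rankK_in iS iS); apply: allP.
Qed.

Lemma count_mulmx_eq_on_info_set (F : finFieldType) n m (G : 'M[F]_(n, m))
    (S : {set 'I_m}) (w : 'I_m -> F) :
  #|S| = n ->
  (forall v : 'rV[F]_n, {in S, forall j, (v *m G) ord0 j = 0} -> v = 0) ->
  count (fun v : 'rV[F]_n => [forall j in S, (v *m G) ord0 j == w j])
        (enum 'rV[F]_n) = 1%N.
Proof.
move=> cardS ker; subst n.
pose N : 'M[F]_#|S| := \matrix_(i, k) G i (enum_val k).
have NE (v : 'rV[F]_#|S|) k : (v *m N) 0 k = (v *m G) 0 (enum_val k).
  by rewrite !mxE; apply: eq_bigr => i _; rewrite mxE.
have injN : injective (fun v : 'rV[F]_#|S| => v *m N).
  move=> u v /= uvN; apply/eqP; rewrite -subr_eq0; apply/eqP/ker => j jS.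
  by rewrite -(enum_rankK_in jS jS) -NE mulmxBl uvN subrr mxE.
have [g gK Kg] := injF_bij injN.
pose v0 := g (\row_k w (enum_val k)).
rewrite (eq_count (a2 := pred1 v0)); last first.
  move=> v /=; rewrite forall_in_enum_val; apply/forallP/eqP => [vw | -> k].
    apply: injN; rewrite /v0 /= Kg; apply/rowP => k; rewrite NE [RHS]mxE.
    exact/eqP/vw.
  by rewrite -NE /v0 /= Kg mxE.
by rewrite count_uniq_mem ?enum_uniq // mem_enum.
Qed.

Section BlockColumns.
Variables (T : eqType) (m n : nat) (C : {set 'I_m}).

Definition block_columns : {set 'I_(m + n)} :=
  [set lshift n i | i in C] :|: [set rshift m j | j : 'I_n].

Lemma card_block_columns : #|block_columns| = (#|C| + n)%N.
Proof.
have disjoint_shifts : [set lshift n i | i in C] :&: [set rshift m j | j : 'I_n] = set0.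
  apply/setP => j; rewrite !inE; apply/andP => -[/imsetP[i _ ->] /imsetP[k _ /eqP]].
  by rewrite eq_lrshift.
rewrite cardsU disjoint_shifts cards0 subn0 !card_imset ?cardsT ?card_ord //.
- exact: rshift_inj.
- exact: lshift_inj.
Qed.

Lemma forall_in_block_columns (u : 'rV[T]_(m + n)) (f : 'I_m -> T) (b : 'rV[T]_n) :
  [forall j in block_columns, u ord0 j == row_mx (\row_i f i) b ord0 j]
  = [forall i in C, lsubmx u ord0 i == f i] && (rsubmx u == b).
Proof.
apply/forall_inP/andP => [allS | [/forall_inP allC /eqP <-] j].
  split.
    apply/forall_inP => i iC.
    have /allS/eqP : lshift n i \in block_columns by rewrite inE imset_f.
    by rewrite row_mxEl mxE => ufi; rewrite mxE ufi.
  apply/eqP/rowP => k.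
  have /allS/eqP : rshift m k \in block_columns by rewrite inE imset_f ?orbT.
  by rewrite row_mxEr => <-; rewrite mxE.
rewrite inE => /orP[/imsetP[i iC ->] | /imsetP[k _ ->]].
  by rewrite row_mxEl mxE -(eqP (allC i iC)) mxE.
by rewrite row_mxEr mxE.
Qed.

End BlockColumns.

Definition i0 : 'I_3 := @Ordinal 3 0 isT.
Definition i1 : 'I_3 := @Ordinal 3 1 isT.
Definition i2 : 'I_3 := @Ordinal 3 2 isT.

Section ConicKernel.
Variable F : fieldType.

Lemma mul_subr_eq0 (s t x : F) : s != t -> ((s - t) * x == 0) = (x == 0).
Proof. by move=> st; rewrite mulf_eq0 subr_eq0 (negbTE st). Qed.

Lemma quadratic_eq0_3roots (a b c s t u : F) : s != t -> t != u -> s != u ->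
    a + b * s + c * s ^+ 2 = 0 -> a + b * t + c * t ^+ 2 = 0 ->
    a + b * u + c * u ^+ 2 = 0 ->
  [/\ a = 0, b = 0 & c = 0].
Proof.
move=> st tu su hs ht hu.
have : (s - t) * (b + c * (s + t))
       = (a + b * s + c * s ^+ 2) - (a + b * t + c * t ^+ 2) by ring.
have : (s - u) * (b + c * (s + u))
       = (a + b * s + c * s ^+ 2) - (a + b * u + c * u ^+ 2) by ring.
rewrite hs ht hu subrr => /eqP; rewrite mul_subr_eq0 // => /eqP slope_su.
move/eqP; rewrite mul_subr_eq0 // => /eqP slope_st.
have : (t - u) * c = (b + c * (s + t)) - (b + c * (s + u)) by ring.
rewrite slope_st slope_su subrr => /eqP; rewrite mul_subr_eq0 // => /eqP c0.
move: slope_st hs; rewrite c0 mul0r addr0 => ->.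
by rewrite !mul0r !addr0.
Qed.

Lemma linear_eq0_2roots (a b s t : F) : s != t ->
  a + b * s = 0 -> a + b * t = 0 -> a = 0 /\ b = 0.
Proof.
move=> st hs ht.
have : (s - t) * b = (a + b * s) - (a + b * t) by ring.
rewrite hs ht subrr => /eqP; rewrite mul_subr_eq0 // => /eqP b0.
by move: hs; rewrite b0 mul0r addr0.
Qed.

(* In characteristic 2, s^2 - t^2 = (s - t)^2. *)
Lemma even_quadratic_eq0_2roots (a c s t : F) : (2%:R : F) = 0 -> s != t ->
  a + c * s ^+ 2 = 0 -> a + c * t ^+ 2 = 0 -> a = 0 /\ c = 0.
Proof.
move=> char2 st hs ht.
have : (s - t) * ((s - t) * c)
       = (a + c * s ^+ 2) - (a + c * t ^+ 2) + 2%:R * (c * (t ^+ 2 - s * t)) by ring.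
rewrite hs ht char2 subrr mul0r addr0 => /eqP; rewrite !mul_subr_eq0 // => /eqP c0.
by move: hs; rewrite c0 mul0r addr0.
Qed.

Lemma row3_eq0 (v : 'rV[F]_3) : v 0 i0 = 0 -> v 0 i1 = 0 -> v 0 i2 = 0 -> v = 0.
Proof.
move=> v0 v1 v2; apply/rowP => -[[|[|[|//]]] lt_j3]; rewrite mxE.
- by rewrite -v0; congr (v _ _); apply: val_inj.
- by rewrite -v1; congr (v _ _); apply: val_inj.
- by rewrite -v2; congr (v _ _); apply: val_inj.
Qed.

(* [Some s] is the point (1, s, s^2) and [None] the point (0, 0, 1). *)
Definition conic_coord (p : option F) (j : 'I_3) : F :=
  if p is Some s then s ^+ j else (j == i2)%:R.

Definition conic_form (v : 'rV[F]_3) (p : option F) : F :=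
  if p is Some s then v 0 i0 + v 0 i1 * s + v 0 i2 * s ^+ 2 else v 0 i2.

Lemma sum_conic_coord (v : 'rV[F]_3) p :
  \sum_j v 0 j * conic_coord p j = conic_form v p.
Proof.
rewrite !big_ord_recr big_ord0 /= add0r.
have -> : widen_ord (leqnSn 2) (widen_ord (leqnSn 1) ord_max) = i0 by exact: val_inj.
have -> : widen_ord (leqnSn 2) ord_max = i1 by exact: val_inj.
have -> : ord_max = i2 by exact: val_inj.
by case: p => [s|] /=; rewrite ?expr0 ?expr1 ?mulr1 // !mulr0 !add0r.
Qed.

Lemma conic_form_eq0_3pts (v : 'rV[F]_3) p1 p2 p3 :
    p1 != p2 -> p2 != p3 -> p1 != p3 ->
    conic_form v p1 = 0 -> conic_form v p2 = 0 -> conic_form v p3 = 0 ->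
  v = 0.
Proof.
case: p1 => [s|]; case: p2 => [t|]; case: p3 => [u|] //= n12 n23 n13 h1 h2 h3.
- by have [] := quadratic_eq0_3roots n12 n23 n13 h1 h2 h3; apply: row3_eq0.
- rewrite h3 !mul0r !addr0 in h1 h2.
  by have [v0 v1] := linear_eq0_2roots n12 h1 h2; apply: row3_eq0.
- rewrite h2 !mul0r !addr0 in h1 h3.
  by have [v0 v1] := linear_eq0_2roots n13 h1 h3; apply: row3_eq0.
- rewrite h1 !mul0r !addr0 in h2 h3.
  by have [v0 v1] := linear_eq0_2roots n23 h2 h3; apply: row3_eq0.
Qed.

Lemma conic_form_eq0_nucleus (v : 'rV[F]_3) p1 p2 : (2%:R : F) = 0 ->
    p1 != p2 -> conic_form v p1 = 0 -> conic_form v p2 = 0 -> v 0 i1 = 0 ->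
  v = 0.
Proof.
move=> char2; case: p1 => [s|]; case: p2 => [t|] //= n12 h1 h2 v1.
- rewrite v1 !mul0r !addr0 in h1 h2.
  by have [v0 v2] := even_quadratic_eq0_2roots char2 n12 h1 h2; apply: row3_eq0.
- by apply: row3_eq0 => //; move: h1; rewrite v1 h2 !mul0r !addr0.
- by apply: row3_eq0 => //; move: h2; rewrite v1 h1 !mul0r !addr0.
Qed.

End ConicKernel.

Section ConicAOA.
Variable F : finFieldType.

Definition conic_point (i : 'I_#|F|.+1) : option F :=
  omap enum_val (unlift ord_max i).

Lemma conic_point_inj : injective conic_point.
Proof.
move=> i j; rewrite /conic_point.
case: unliftP => [i' ->|->]; case: unliftP => [j' ->|->] //= [].
by move/enum_val_inj ->.
Qed.

Definition conic_mx : 'M[F]_(3, #|F|.+1) :=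
  \matrix_(j, i) conic_coord (conic_point i) j.

Definition nucleus_mx : 'M[F]_(3, 3 - 2) := \matrix_(j, k) (j == i1)%:R.

Definition conic_aoa : seq ('rV[F]_#|F|.+1 * 'rV[F]_(3 - 2)) :=
  [seq (v *m conic_mx, v *m nucleus_mx) | v <- enum 'rV[F]_3].

Lemma mul_conic_mx (v : 'rV[F]_3) i :
  (v *m conic_mx) ord0 i = conic_form v (conic_point i).
Proof. by rewrite mxE -sum_conic_coord; apply: eq_bigr => j _; rewrite mxE. Qed.

Lemma mul_nucleus_mx (v : 'rV[F]_3) k : (v *m nucleus_mx) ord0 k = v 0 i1.
Proof.
rewrite mxE (bigD1 i1) //= mxE eqxx mulr1 big1 ?addr0 // => j /negbTE nj.
by rewrite mxE nj mulr0.
Qed.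

Lemma conic_aoa_linear :
  exists U : {vspace 'rV[F]_(#|F|.+1 + (3 - 2))},
    forall w, (w \in U) = has (fun r => row_mx r.1 r.2 == w) conic_aoa.
Proof.
exists (linfun (mulmxr (row_mx conic_mx nucleus_mx)) @: fullv)%VS => w.
apply/memv_imgP/hasP => [[v _ ->] | [_ /mapP[v _ ->] /eqP <-]].
  exists (v *m conic_mx, v *m nucleus_mx); first by apply: map_f; rewrite mem_enum.
  by rewrite /= lfunE /= mul_mx_row.
by exists v; rewrite ?memvf // lfunE /= mul_mx_row.
Qed.

Lemma conic_aoa_OA : is_OA 3 #|F|.+1 (map fst conic_aoa).
Proof.
split; first by rewrite !size_map -enumT -cardT card_mx.
move=> C cardC f; rewrite -map_comp count_map.
apply: count_mulmx_eq_on_info_set => // v vC0.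
have /card_gt2P[a [b [c [[aC bC cC] [ab bc ca]]]]] : (2 < #|C|)%N by rewrite cardC.
apply: (@conic_form_eq0_3pts _ v (conic_point a) (conic_point b) (conic_point c)).
- by rewrite (inj_eq conic_point_inj).
- by rewrite (inj_eq conic_point_inj).
- by rewrite (inj_eq conic_point_inj) eq_sym.
all: by rewrite -mul_conic_mx; apply: vC0.
Qed.

Lemma conic_aoa_augmented : (2%:R : F) = 0 ->
  forall C : {set 'I_#|F|.+1}, #|C| = 2 ->
  forall (f : 'I_#|F|.+1 -> F) (y : 'rV[F]_(3 - 2)),
    count (fun r : 'rV_#|F|.+1 * 'rV_(3 - 2) =>
             [forall i in C, r.1 ord0 i == f i] && (r.2 == y)) conic_aoa = 1%N.
Proof.
move=> char2 C cardC f y.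
pose M := row_mx conic_mx nucleus_mx.
have ME v : v *m M = row_mx (v *m conic_mx) (v *m nucleus_mx) by rewrite mul_mx_row.
rewrite count_map (eq_count (a2 := fun v => [forall j in block_columns (3 - 2) C,
    (v *m M) ord0 j == row_mx (\row_i f i) y ord0 j])); last first.
  by move=> v; rewrite /= forall_in_block_columns ME row_mxKl row_mxKr.
apply: count_mulmx_eq_on_info_set => [|v vS0]; first by rewrite card_block_columns cardC.
have /cards2P[a [b [ab defC]]] : #|C| == 2%N by rewrite cardC.
apply: (conic_form_eq0_nucleus char2 (p1 := conic_point a) (p2 := conic_point b)).
- by rewrite (inj_eq conic_point_inj).
- rewrite -mul_conic_mx -(row_mxEl _ (v *m nucleus_mx)) -ME.
  by apply: vS0; rewrite inE imset_f // defC !inE eqxx.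
- rewrite -mul_conic_mx -(row_mxEl _ (v *m nucleus_mx)) -ME.
  by apply: vS0; rewrite inE imset_f // defC !inE eqxx orbT.
- rewrite -(mul_nucleus_mx v ord0) -(row_mxEr (v *m conic_mx)) -ME.
  by apply: vS0; rewrite inE imset_f ?orbT.
Qed.

End ConicAOA.

Theorem theorem3p8 (q : nat) (hq2 : exists m : nat, q = (2 ^ m)%N) (hq4 : (4 <= q)%N)
    (F : finFieldType) (hF : #|F| = q) :
  exists A : seq ('rV[F]_(q.+1) * 'rV[F]_(3 - 2)),
    is_linear_AOA 2 3 (q.+1) A.
Proof.
subst q; have [m card2m] := hq2.
have char2 : (2%:R : F) = 0 by apply/pcharf0/(card_finPcharP card2m).
exists (conic_aoa F); split; last exact: conic_aoa_linear.
split; [ | exact: conic_aoa_OA | by rewrite card_mx mul1n | exact: conic_aoa_augmented].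
by split=> //; rewrite ltnS (leq_trans _ hq4).
Qed.
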